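(* For all positive integers $n,k$ with $k\le n$, \[ \overline{M}_k(n)=\sum_{d\mid n}\varphi(d)\sum_{\substack{\delta\mid n\\ \gcd(\delta,d)=1}}\mu(\delta)\sum_{\substack{1\le j\le n/\delta\\ \delta j\equiv 1 \ (\mathrm{mod}\ d)}} f_k\!\left(\left\lfloor \frac{n}{j\delta}\right\rfloor\right), \] where $d$ and $\delta$ run over the positive divisors of $n$, and for $d=1$ the congruence condition is vacuous.
   Context: For a nonempty finite set $A$ of positive integers, $(A)$ denotes the greatest common divisor of the elements of $A$. $\varphi$ is Euler's totient function and $\mu$ is the Möbius function. For $m,k\in\mathbb{N}$, $f_k(m)$ is the number of $k$-element subsets $A\subseteq\{1,2,\ldots,m\}$ with $(A)=1$ (so $f_k(m)=0$ if $m<k$; equivalently $f_k(m)=\sum_{d=1}^m\mu(d)\binom{\lfloor m/d\rfloor}{k}$). For $1\le k\le n$ define \[ \overline{M}_k(n)=\sum_{\substack{A\subseteq\{1,\ldots,n\},\ \#A=k\\ \gcd((A),n)=1}}\gcd((A)-1,n), \] the sum over all $k$-element subsets $A$ of $\{1,\ldots,n\}$ with $\gcd((A),n)=1$, with the convention $\gcd(0,n)=n$. *)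

From mathcomp Require Import all_boot all_order all_algebra.
Set Implicit Arguments. Unset Strict Implicit. Unset Printing Implicit Defensive.
Import GRing.Theory Num.Theory.

(* Subsets of {1,...,m} are encoded as sets A : {set 'I_m.+1} with 0 \notin A. *)

Definition setgcd (m : nat) (A : {set 'I_m.+1}) : nat :=
  \big[gcdn/0]_(i in A) (i : nat).

Definition ksubsets (m k : nat) : {set {set 'I_m.+1}} :=
  [set A : {set 'I_m.+1} | (ord0 \notin A) && (#|A| == k)].

Definition moebius (n : nat) : int :=
  if n == 0 then 0%R
  else if all (fun p => logn p n == 1) (primes n)
       then ((-1) ^+ size (primes n))%R else 0%R.

Definition fk (k m : nat) : nat :=
  #|[set A in ksubsets m k | setgcd A == 1]|.

Definition Mbar (k n : nat) : nat :=
  \sum_(A in ksubsets n k | coprime (setgcd A) n) gcdn (setgcd A).-1 n.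

(* Write g = (A) for a k-subset A of {1..n}.  The argument has three steps.
   1. gcd(g - 1, n) = sum_{d | n, d | g - 1} phi(d) (Gauss' identity restricted
      to the divisors of a gcd); exchanging sums gives
      Mbar_k(n) = sum_{d | n} phi(d) * #{A : (g, n) = 1, d | g - 1}.
   2. The coprimality indicator is sum_{delta | (g, n)} mu(delta) (the basic
      Moebius identity).  When d | g - 1, any delta dividing g is coprime to d,
      so the count becomes sum_{delta | n, (delta, d) = 1} mu(delta) *
      #{A : delta | g, d | g - 1}.
   3. Writing g = j * delta, the k-subsets with (A) = j * delta are exactly the
      (j * delta)-multiples of k-subsets of {1..n/(j delta)} with gcd 1, hence
      number f_k(n / (j delta)); the condition d | g - 1 reads
      delta * j = 1 (mod d). *)

From mathcomp Require Import all_boot all_order all_algebra.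
From mathcomp Require Import cyclic.
Import GRing.Theory Num.Theory.
Set Implicit Arguments. Unset Strict Implicit. Unset Printing Implicit Defensive.

Section DivisorBigops.
Variables (R : Type) (idx : R) (op : Monoid.com_law idx).

Lemma big_divisors_dvd n m (F : nat -> R) : 0 < n ->
  \big[op/idx]_(d <- divisors n | d %| m) F d =
  \big[op/idx]_(d <- divisors (gcdn m n)) F d.
Proof.
move=> n_gt0; rewrite -big_filter; apply/perm_big/uniq_perm.
- by rewrite filter_uniq ?divisors_uniq.
- exact: divisors_uniq.
move=> d; rewrite mem_filter -!dvdn_divisors ?gcdn_gt0 ?n_gt0 ?orbT //.
by rewrite dvdn_gcd.
Qed.

Lemma big_ord_divisors n (F : nat -> R) : 0 < n ->
  \big[op/idx]_(d < n.+1 | d %| n) F d = \big[op/idx]_(d <- divisors n) F d.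
Proof.
move=> n_gt0; rewrite -(big_mkord (dvdn^~ n)) -big_filter.
apply/perm_big/uniq_perm; [by rewrite filter_uniq ?iota_uniq | exact: divisors_uniq |].
move=> d; rewrite mem_filter mem_index_iota -dvdn_divisors //.
by case dn: (d %| n); rewrite //= ltnS dvdn_leq.
Qed.

End DivisorBigops.

(* Gauss' identity sum_{d | m} phi(d) = m, applied to m = gcd(x, n). *)
Lemma gcd_sum_totient x n : 0 < n ->
  gcdn x n = \sum_(d <- divisors n | d %| x) totient d.
Proof.
move=> n_gt0; rewrite big_divisors_dvd // -big_ord_divisors ?gcdn_gt0 ?n_gt0 ?orbT //.
by rewrite sum_totient_dvd.
Qed.

Lemma moebius_mul_dvd p d : prime p -> 0 < d -> p %| d ->
  moebius (p * d) = 0%R.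
Proof.
move=> p_pr d_gt0 pd; rewrite /moebius muln_eq0 !eqn0Ngt prime_gt0 // d_gt0 /=.
case: ifP => // /allP sqfree.
have /sqfree : p \in primes (p * d).
  by rewrite mem_primes p_pr muln_gt0 prime_gt0 // d_gt0 dvdn_mulr.
rewrite (lognM _ (prime_gt0 p_pr) d_gt0) (logn_prime _ p_pr) eqxx.
have : 0 < logn p d by rewrite logn_gt0 mem_primes p_pr d_gt0.
by case: (logn p d).
Qed.

Lemma primes_mul_prime p d : prime p -> 0 < d -> ~~ (p %| d) ->
  perm_eq (primes (p * d)) (p :: primes d).
Proof.
move=> p_pr d_gt0 pNd; apply: uniq_perm; first exact: primes_uniq.
  by rewrite /= primes_uniq mem_primes p_pr d_gt0 (negbTE pNd).
move=> q; rewrite in_cons primesM ?(prime_gt0 p_pr) ?d_gt0 //.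
by rewrite (primes_prime p_pr) mem_seq1.
Qed.

Lemma moebius_mul_ndvd p d : prime p -> 0 < d -> ~~ (p %| d) ->
  moebius (p * d) = (- moebius d)%R.
Proof.
move=> p_pr d_gt0 pNd; have peq := primes_mul_prime p_pr d_gt0 pNd.
rewrite /moebius muln_eq0 !eqn0Ngt prime_gt0 // d_gt0 /=.
rewrite (perm_size peq) (perm_all _ peq) /= (lognM _ (prime_gt0 p_pr) d_gt0).
rewrite (logn_prime _ p_pr) eqxx logn_coprime ?prime_coprime // eqxx /=.
rewrite (@eq_in_all _ _ (fun q => logn q d == 1)); last first.
  move=> q; rewrite mem_primes => /and3P[q_pr _ qd].
  rewrite (lognM _ (prime_gt0 p_pr) d_gt0) (logn_prime _ p_pr).
  by case: (q =P p) qd => [->|]; rewrite ?(negbTE pNd).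
by case: ifP; rewrite ?oppr0 // exprS mulN1r.
Qed.

Lemma divisors_mul_prime_dvd p m : prime p -> 0 < m ->
  perm_eq [seq d <- divisors (p * m) | p %| d] [seq p * d | d <- divisors m].
Proof.
move=> p_pr m_gt0; have p_gt0 := prime_gt0 p_pr.
apply: uniq_perm; first by rewrite filter_uniq ?divisors_uniq.
  by rewrite map_inj_uniq ?divisors_uniq // => x y /eqP; rewrite eqn_pmul2l // => /eqP.
move=> x; rewrite mem_filter -dvdn_divisors ?muln_gt0 ?p_gt0 //.
apply/andP/mapP => [[/dvdnP[y ->] ym]|[y yd ->]].
  by exists y; rewrite 1?mulnC // -dvdn_divisors // -(dvdn_pmul2l p_gt0) mulnC.
by rewrite dvdn_mulr // dvdn_pmul2l // dvdn_divisors.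
Qed.

Lemma divisors_mul_prime_ndvd p m : prime p -> 0 < m ->
  perm_eq [seq d <- divisors (p * m) | ~~ (p %| d)]
          [seq d <- divisors m | ~~ (p %| d)].
Proof.
move=> p_pr m_gt0; apply: uniq_perm; rewrite ?filter_uniq ?divisors_uniq //.
move=> x; rewrite !mem_filter -!dvdn_divisors ?muln_gt0 ?(prime_gt0 p_pr) //.
case: (boolP (p %| x)) => //= pNx.
by rewrite Gauss_dvdr // coprime_sym prime_coprime.
Qed.

(* The fundamental Moebius identity: sum_{d | m} mu(d) = [m = 1].  For m > 1
   pick a prime p | m: the divisors p * d contribute -mu(d) or 0 and cancel
   the divisors prime to p. *)
Lemma sum_moebius_divisors m : 0 < m ->
  (\sum_(d <- divisors m) moebius d = (m == 1)%:R)%R.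
Proof.
move=> m_gt0; have [m_gt1|] := ltnP 1 m; last first.
  move=> m_le1; have -> : m = 1 by apply/anti_leq; rewrite m_le1 m_gt0.
  by rewrite big_seq1.
have [p p_pr /dvdnP[m' Em]] : exists2 p, prime p & p %| m.
  by exists (pdiv m); [apply: pdiv_prime | apply: pdiv_dvd].
rewrite mulnC in Em.
have m'_gt0 : 0 < m' by move: m_gt0; rewrite Em muln_gt0 => /andP[].
rewrite gtn_eqF // Em (bigID (dvdn p)) /=.
rewrite -(big_filter _ (dvdn p)) -(big_filter _ (fun d => ~~ (p %| d))).
rewrite (perm_big _ (divisors_mul_prime_dvd p_pr m'_gt0)).
rewrite (perm_big _ (divisors_mul_prime_ndvd p_pr m'_gt0)) big_map.
have divisor_gt0 d : d \in divisors m' -> 0 < d.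
  by rewrite -dvdn_divisors // => /dvdn_gt0; apply.
rewrite (bigID (dvdn p)) /= big1_seq ?add0r => [|d /andP[pd /divisor_gt0]];
  last by move=> d_gt0; apply: moebius_mul_dvd.
rewrite big_filter -big_split big1_seq //= => d /andP[pNd /divisor_gt0 d_gt0].
by rewrite moebius_mul_ndvd // addNr.
Qed.

Lemma setgcd_dvd m (A : {set 'I_m.+1}) (i : 'I_m.+1) : i \in A -> setgcd A %| i.
Proof. by move=> iA; apply: (biggcdn_inf i). Qed.

Lemma setgcd_bounds m k (A : {set 'I_m.+1}) : 0 < k -> A \in ksubsets m k ->
  0 < setgcd A <= m.
Proof.
move=> k_gt0; rewrite inE => /andP[A0 /eqP Ak].
have /card_gt0P[i iA] : 0 < #|A| by rewrite Ak.
have i_gt0 : 0 < i.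
  by rewrite lt0n; apply: contraNneq A0 => i0; rewrite -(@ord_inj _ i ord0).
have gi := setgcd_dvd iA.
by rewrite (dvdn_gt0 i_gt0 gi) (leq_trans (dvdn_leq i_gt0 gi)) // -ltnS.
Qed.

(* Multiplication by m > 0 embeds {0..n/m} into {0..n}; it maps subsets of
   {1..n/m} with gcd c bijectively to subsets of {1..n} with gcd m * c whose
   elements are all multiples of m. *)
Section Scaling.
Variables (n m : nat).
Hypothesis m_gt0 : 0 < m.

Definition scale (x : 'I_(n %/ m).+1) : 'I_n.+1 := inord (m * x).

(* scale is really multiplication by m (no wrap-around). *)
Lemma scaleE x : scale x = m * x :> nat.
Proof.
rewrite inordK // ltnS (leq_trans _ (leq_divM n m)) // mulnC leq_mul2r.
by rewrite -ltnS ltn_ord orbT.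
Qed.

Lemma scale_inj : injective scale.
Proof.
move=> x y /(congr1 val); rewrite /= !scaleE => /eqP.
by rewrite eqn_pmul2l // => /eqP /val_inj.
Qed.

Lemma setgcd_scale (C : {set 'I_(n %/ m).+1}) : setgcd (scale @: C) = m * setgcd C.
Proof.
rewrite /setgcd big_imset /=; last by move=> x y _ _; apply: scale_inj.
under eq_bigr do rewrite scaleE.
by rewrite (big_morph (muln m) (muln_gcdr m) (muln0 m)).
Qed.

Lemma ksubsets_scale k (C : {set 'I_(n %/ m).+1}) :
  (scale @: C \in ksubsets n k) = (C \in ksubsets (n %/ m) k).
Proof.
rewrite !inE card_imset; last exact: scale_inj.
congr (~~ _ && _); apply/imsetP/idP => [[x xC /(congr1 val)]|C0].
  rewrite /= scaleE => /esym/eqP; rewrite muln_eq0 eqn0Ngt m_gt0 /= => /eqP x0.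
  by rewrite (_ : ord0 = x) //; apply: val_inj.
by exists ord0 => //; apply: val_inj; rewrite /= scaleE muln0.
Qed.

Lemma scale_preimK (A : {set 'I_n.+1}) : {in A, forall i : 'I_n.+1, m %| i} ->
  scale @: (scale @^-1: A) = A.
Proof.
move=> mA; apply/setP => a; apply/imsetP/idP => [[x]|aA]; first by rewrite inE => ? ->.
have a_le : a %/ m < (n %/ m).+1 by rewrite ltnS leq_div2r // -ltnS.
have scale_a : scale (inord (a %/ m)) = a.
  by apply: val_inj; rewrite /= scaleE inordK // mulnC divnK ?mA.
by exists (inord (a %/ m)); rewrite ?inE scale_a.
Qed.

(* The k-subsets of {1..n} with gcd exactly m are the m-multiples of the
   k-subsets of {1..n/m} with gcd 1, so there are f_k(n/m) of them. *)
Lemma card_setgcd_eq k :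
  #|[set A in ksubsets n k | setgcd A == m]| = fk k (n %/ m).
Proof.
rewrite /fk -(card_imset _ (imset_inj scale_inj)); apply: eq_card => A.
rewrite in_set; apply/andP/imsetP => [[AS /eqP gA]|[C]]; last first.
  rewrite in_set => /andP[CS /eqP gC] ->.
  by rewrite ksubsets_scale setgcd_scale gC muln1.
have mA : {in A, forall i : 'I_n.+1, m %| i} by move=> i /setgcd_dvd; rewrite gA.
exists (scale @^-1: A); last by rewrite scale_preimK.
move: AS gA; rewrite -{1 2}(scale_preimK mA) ksubsets_scale setgcd_scale => AS.
by move/eqP; rewrite -[X in _ == X]muln1 eqn_pmul2l // in_set AS.
Qed.

End Scaling.

Lemma fk_sum_setgcd n m k : 0 < m ->
  fk k (n %/ m) = \sum_(A in ksubsets n k) (setgcd A == m : nat).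
Proof.
move=> m_gt0; rewrite -card_setgcd_eq // -sum1_card.
rewrite (eq_bigl (fun A => (A \in ksubsets n k) && (setgcd A == m))) => [|A];
  last by rewrite inE.
by rewrite big_mkcondr /=; apply: eq_bigr => A _; case: (_ == _).
Qed.

Lemma eqn_mod1_pred g d : 0 < g -> (g == 1 %[mod d]) = (d %| g.-1).
Proof.
move=> g_gt0; rewrite -[g in LHS]prednK // -addn1.
by rewrite -[1 in RHS in _ == RHS]add0n eqn_modDr mod0n.
Qed.

(* For 0 < g <= n, exactly one multiple j*de of de can equal g, and it is
   counted iff de * j = 1 (mod d). *)
Lemma sum_multiple_indicator n g de d : 0 < de -> 0 < g <= n ->
  \sum_(1 <= j < (n %/ de).+1 | de * j == 1 %[mod d]) (g == j * de : nat) =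
  (de %| g) && (d %| g.-1).
Proof.
move=> de_gt0 /andP[g_gt0 g_le_n].
have [deg|deNg] /= := boolP (de %| g); last first.
  by rewrite big1 // => j _; case: eqP => // g_eq; rewrite g_eq dvdn_mull in deNg.
rewrite big_mkcond /= (bigD1_seq (g %/ de)) /=; last exact: iota_uniq; last first.
  by rewrite mem_index_iota divn_gt0 // dvdn_leq //= ltnS leq_div2r.
rewrite big1 ?addn0 => [|j /negbTE jNg]; last first.
  by case: ifP => // _; rewrite eq_sym -eqn_div // jNg.
by rewrite mulnC divnK // eqxx eqn_mod1_pred.
Qed.

Lemma sum_setgcd_congr n k de d : 0 < k -> 0 < de ->
  \sum_(A in ksubsets n k) ((de %| setgcd A) && (d %| (setgcd A).-1) : nat) =
  \sum_(1 <= j < (n %/ de).+1 | de * j == 1 %[mod d]) fk k (n %/ (j * de)).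
Proof.
move=> k_gt0 de_gt0; rewrite big_nat_cond.
rewrite (eq_bigr (fun j => \sum_(A in ksubsets n k) (setgcd A == j * de : nat)));
  last by move=> j /andP[/andP[j_gt0 _] _]; rewrite fk_sum_setgcd ?muln_gt0 ?j_gt0.
rewrite -big_nat_cond exchange_big /=; apply: eq_bigr => A AS.
by rewrite sum_multiple_indicator // (setgcd_bounds k_gt0 AS).
Qed.

(* Step 1: expand gcd((A) - 1, n) with Gauss' identity and exchange sums. *)
Lemma Mbar_totient_expansion k n : 0 < n -> Mbar k n =
  \sum_(d <- divisors n) totient d *
     \sum_(A in ksubsets n k) (coprime (setgcd A) n && (d %| (setgcd A).-1) : nat).
Proof.
move=> n_gt0; under [RHS]eq_bigr do rewrite big_distrr.
rewrite exchange_big /Mbar big_mkcondr /=; apply: eq_bigr => A _.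
case: (coprime _ _); last by rewrite big1 // => d _; rewrite muln0.
rewrite gcd_sum_totient // big_mkcond /=; apply: eq_bigr => d _.
by case: (d %| _); rewrite ?muln1 ?muln0.
Qed.

Lemma coprime_moebius_sum g n : 0 < g -> 0 < n ->
  ((coprime g n)%:R : int) = (\sum_(de <- divisors n | (de %| g)%N) moebius de)%R.
Proof.
move=> g_gt0 n_gt0.
by rewrite big_divisors_dvd // sum_moebius_divisors ?gcdn_gt0 ?g_gt0.
Qed.

Lemma dvdn_pred_coprime de d g : 0 < g -> de %| g -> d %| g.-1 -> coprime de d.
Proof.
move=> g_gt0 de_g d_g1; rewrite /coprime -dvdn1.
have dvd_g1 : gcdn de d %| g.-1 := dvdn_trans (dvdn_gcdr _ _) d_g1.
by rewrite -(dvdn_addr 1 dvd_g1) addn1 prednK // (dvdn_trans (dvdn_gcdl _ _)).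
Qed.

Lemma coprime_congr_moebius g n d : 0 < g -> 0 < n ->
  ((coprime g n && (d %| g.-1))%:R : int) =
  (\sum_(de <- divisors n | coprime de d)
     moebius de * ((de %| g) && (d %| g.-1))%N%:R)%R.
Proof.
move=> g_gt0 n_gt0; have [d_g1|_] := boolP (d %| g.-1); last first.
  by rewrite andbF big1 // => de _; rewrite andbF mulr0.
rewrite !andbT coprime_moebius_sum // big_mkcond [RHS]big_mkcond /=.
apply: eq_bigr => de _.
have [de_g|] := boolP (de %| g); last by case: ifP; rewrite ?mulr0.
by rewrite (dvdn_pred_coprime g_gt0 de_g d_g1) mulr1.
Qed.

Local Open Scope ring_scope.

Lemma sum_coprime_congr n k d : (0 < n)%N -> (0 < k)%N ->
  (\sum_(A in ksubsets n k) (coprime (setgcd A) n && (d %| (setgcd A).-1))%N)%N%:Z =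
  \sum_(de <- divisors n | coprime de d) moebius de *
    \sum_(1 <= j < (n %/ de).+1 | (de * j == 1 %[mod d])%N) (fk k (n %/ (j * de)))%:Z.
Proof.
move=> n_gt0 k_gt0; rewrite -natz natr_sum.
under eq_bigr => A AS.
  have /andP[g_gt0 _] := setgcd_bounds k_gt0 AS.
  rewrite (coprime_congr_moebius _ g_gt0 n_gt0); over.
rewrite exchange_big /= big_seq_cond [RHS]big_seq_cond; apply: eq_bigr => de /andP[].
rewrite -dvdn_divisors // => /(dvdn_gt0 n_gt0) de_gt0 _; rewrite -mulr_sumr -natr_sum.
rewrite sum_setgcd_congr ?de_gt0 // natr_sum.
by congr (_ * _); apply: eq_bigr => j _; rewrite natz.
Qed.

Theorem mainTheorem2 (n k : nat) (hk : (0 < k)%N) (hkn : (k <= n)%N) :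
  (Mbar k n)%:Z =
  \sum_(d <- divisors n) (totient d)%:Z *
    \sum_(delta <- divisors n | coprime delta d) moebius delta *
      \sum_(1 <= j < (n %/ delta).+1 | (delta * j == 1 %[mod d])%N)
        (fk k (n %/ (j * delta)))%:Z.
Proof.
have n_gt0 : (0 < n)%N := leq_trans hk hkn.
rewrite Mbar_totient_expansion // -natz natr_sum; apply: eq_bigr => d _.
by rewrite natrM -sum_coprime_congr // !natz.
Qed.
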